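(* Let $M,N$ be weights of $\mathbb{R}^m,\mathbb{R}^n$, let $A\in\mathbb{R}^{m\times n}$ with $MA=AN$, and let $K\subseteq\mathbb{R}^n$ be a closed cone with $A^{[\dagger]}\circ A\circ K\subseteq K$. Then the cone $(A\circ I\circ K)^{[*]}\cap\mathcal{R}(A\circ I)$ is acute if and only if $$(A\circ I\circ K)^{[*]}\cap\mathcal{R}(A\circ I)\subseteq A\circ I\circ K.$$
   Context: A weight is a real symmetric matrix $W$ with $W^2=I$. $\mathbb{R}^m$ and $\mathbb{R}^n$ carry weights $M\in\mathbb{R}^{m\times m}$ and $N\in\mathbb{R}^{n\times n}$, respectively. The indefinite inner product on the space with weight $W$ is $[x,y]=\langle x,Wy\rangle$. Indefinite matrix product: if $B$ has $p$ columns and $C$ has $p$ rows (or is a vector in $\mathbb{R}^p$), $p\in\{m,n\}$, and $W$ is the weight of $\mathbb{R}^p$, then $B\circ C:=BWC$. $I$ denotes an identity matrix of the appropriate size. Indefinite adjoint of $B\in\mathbb{R}^{p\times q}$: $B^{[*]}:=W_qB^TW_p$, where $W_p,W_q$ are the weights of $\mathbb{R}^p,\mathbb{R}^q$. Indefinite Moore–Penrose inverse: $A^{[\dagger]}$ is the unique $X\in\mathbb{R}^{n\times m}$ such that - $A\circ X\circ A=A$, - $X\circ A\circ X=X$, - $(A\circ X)^{[*]}=A\circ X$, - $(X\circ A)^{[*]}=X\circ A$. It equals $NA^\dagger M$. Range and null space: for a matrix $B$ with $q$ columns, $\mathcal{R}(B)=\{B\circ x:x\in\mathbb{R}^q\}$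 and $\mathcal{N}(B)=\{x\in\mathbb{R}^q:B\circ x=0\}$. A cone is a nonempty set closed under addition and under multiplication by nonnegative scalars. For $S$ a subset of $\mathbb{R}^p$ with weight $W$, the dual is $S^{[*]}=\{x\in\mathbb{R}^p:[x,t]\ge0\ \forall t\in S\}$. For a matrix $B$ and a set $S$, $B\circ S=\{B\circ s:s\in S\}$. A cone $C$ is acute if $[x,y]\ge0$ for all $x,y\in C$, equivalently $C\subseteq C^{[*]}$. *)

From Stdlib Require Import Reals.
From mathcomp Require Import ssreflect ssrfun ssrbool eqtype ssrnat seq fintype bigop.
Set Implicit Arguments. Unset Strict Implicit. Unset Printing Implicit Defensive.
Local Open Scope R_scope.

Definition vec (n : nat) := 'I_n -> R.
Definition mat (m n : nat) := 'I_m -> 'I_n -> R.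

Definition rsum (n : nat) (F : 'I_n -> R) : R := \big[Rplus/R0]_(i < n) F i.

Definition mmul (m p q : nat) (B : mat m p) (C : mat p q) : mat m q :=
  fun i j => rsum (fun k => B i k * C k j).
Definition mvmul (m p : nat) (B : mat m p) (x : vec p) : vec m :=
  fun i => rsum (fun k => B i k * x k).
Definition trmat (m n : nat) (B : mat m n) : mat n m := fun j i => B i j.
Definition idmat (n : nat) : mat n n :=
  fun i j => if i == j then 1 else 0.
Arguments idmat n : clear implicits.
Definition dot (n : nat) (x y : vec n) : R := rsum (fun i => x i * y i).

Definition weight (n : nat) (W : mat n n) : Prop :=
  trmat W = W /\ mmul W W = idmat n.

Definition iip (n : nat) (W : mat n n) (x y : vec n) : R := dot x (mvmul W y).

(* indefinite products B o C := B W C, W the weight of the inner space R^p *)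
Definition imul (m p q : nat) (W : mat p p) (B : mat m p) (C : mat p q) : mat m q :=
  mmul (mmul B W) C.
Definition imulv (m p : nat) (W : mat p p) (B : mat m p) (x : vec p) : vec m :=
  mvmul (mmul B W) x.

Definition iadj (p q : nat) (Wp : mat p p) (Wq : mat q q) (B : mat p q) : mat q p :=
  mmul (mmul Wq (trmat B)) Wp.

(* X is the indefinite Moore-Penrose inverse of A (A in R^{m x n},
   weights M of R^m and N of R^n) : the four Penrose-type equations. *)
Definition is_imp (m n : nat) (M : mat m m) (N : mat n n) (A : mat m n) (X : mat n m) : Prop :=
  [/\ imul M (imul N A X) A = A,
      imul N (imul M X A) X = X,
      iadj M M (imul N A X) = imul N A X
    & iadj N N (imul M X A) = imul M X A].

Definition vset (p : nat) := vec p -> Prop.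

Definition is_cone (p : nat) (S : vset p) : Prop :=
  (exists x, S x) /\
  (forall x y, S x -> S y -> S (fun i => x i + y i)) /\
  (forall a x, 0 <= a -> S x -> S (fun i => a * x i)).

(* closed in the Euclidean topology of R^p (written with the equivalent
   max-norm balls): every point all of whose neighbourhoods meet S is in S *)
Definition is_closed (p : nat) (S : vset p) : Prop :=
  forall x, (forall eps, 0 < eps -> exists y, S y /\ forall i, Rabs (x i - y i) < eps) ->
            S x.

Definition idual (p : nat) (W : mat p p) (S : vset p) : vset p :=
  fun x => forall t, S t -> 0 <= iip W x t.

Definition iimage (p q : nat) (W : mat q q) (B : mat p q) (S : vset q) : vset p :=
  fun y => exists s, S s /\ y = imulv W B s.

Definition irange (p q : nat) (W : mat q q) (B : mat p q) : vset p :=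
  fun y => exists x, y = imulv W B x.

Definition vinter (p : nat) (S T : vset p) : vset p := fun x => S x /\ T x.
Definition vsubset (p : nat) (S T : vset p) : Prop := forall x, S x -> T x.

Definition acute (p : nat) (W : mat p p) (C : vset p) : Prop :=
  forall x y, C x -> C y -> 0 <= iip W x y.

(* Write X for A^[†]; since N^2 = I, the set A∘I∘K is the ordinary image A K.
   If x lies in D := (A K)^[*] ∩ R(A), then x = A X x because A X A = A.
   Should z := X x lie outside the closed cone K, the point of K nearest to z
   yields a functional w >= 0 on K with <w, z> < 0.  Since X A K ⊆ K and
   R(M X^T) ⊆ R(A), the vector u := M X^T w lies in D, and [x, u] = <z, w> < 0
   contradicts acuteness.  Conversely every element of D pairs nonnegatively
   with every element of A K, so D ⊆ A K forces D to be acute. *)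

From HB Require Import structures.
From Stdlib Require Import Reals Lra FunctionalExtensionality Classical ClassicalEpsilon.
From mathcomp Require Import ssreflect ssrfun ssrbool eqtype ssrnat seq fintype bigop.

Set Implicit Arguments. Unset Strict Implicit.
Local Open Scope R_scope.

HB.instance Definition _ := Monoid.isComLaw.Build R R0 Rplus
  (fun x y z => esym (Rplus_assoc x y z)) Rplus_comm Rplus_0_l.

Section FiniteSums.
Variable n : nat.
Implicit Types F G : 'I_n -> R.

Lemma rsum_ext F G : F =1 G -> rsum F = rsum G.
Proof. by move=> FG; apply: eq_bigr => i _. Qed.

Lemma rsumD F G : rsum (fun i => F i + G i) = rsum F + rsum G.
Proof. exact: big_split. Qed.

Lemma rsumZ c F : rsum (fun i => c * F i) = c * rsum F.
Proof. by symmetry; apply: (big_morph (fun x => c * x)) => [x y|]; ring. Qed.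

Lemma rsum_ge0 F : (forall i, 0 <= F i) -> 0 <= rsum F.
Proof.
move=> F_ge0; apply: (big_ind (fun x => 0 <= x)) => //; first exact: Rle_refl.
by move=> x y; lra.
Qed.

Lemma rsum_ge_term F j : (forall i, 0 <= F i) -> F j <= rsum F.
Proof.
move=> F_ge0; rewrite /rsum (bigD1 j) //= -{1}(Rplus_0_r (F j)).
apply: Rplus_le_compat_l; apply: (big_ind (fun x => 0 <= x)) => //.
  exact: Rle_refl.
by move=> x y; lra.
Qed.

Lemma rsum_delta (i : 'I_n) F : rsum (fun k => (if i == k then 1 else 0) * F k) = F i.
Proof.
rewrite /rsum (bigD1 i) //= eqxx big1 /=; first by ring.
by move=> k /negbTE; rewrite eq_sym => ->; ring.
Qed.

End FiniteSums.

Lemma rsum_swap n p (F : 'I_n -> 'I_p -> R) :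
  rsum (fun i => rsum (F i)) = rsum (fun j => rsum (fun i => F i j)).
Proof. exact: exchange_big. Qed.

Lemma cv_const c : Un_cv (fun _ : nat => c) c.
Proof. by move=> eps eps_gt0; exists 0%nat => j _; rewrite /R_dist Rminus_diag Rabs_R0. Qed.

Lemma cv_rsum n (F : nat -> 'I_n -> R) (L : 'I_n -> R) :
  (forall i, Un_cv (fun j => F j i) (L i)) -> Un_cv (fun j => rsum (F j)) (rsum L).
Proof.
elim: n F L => [|n IH] F L FL.
  rewrite /rsum big_ord0; apply: (Un_cv_ext (fun _ => 0)); last exact: cv_const.
  by move=> j; rewrite big_ord0.
rewrite /rsum big_ord_recr /=.
apply: (Un_cv_ext (fun j => rsum (fun i : 'I_n => F j (widen_ord (leqnSn n) i)) + F j ord_max)).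
  by move=> j; rewrite /rsum big_ord_recr.
by apply: CV_plus; [apply: IH => i; apply: FL | apply: FL].
Qed.

Lemma mmulA a b c d (B : mat a b) (C : mat b c) (D : mat c d) :
  mmul (mmul B C) D = mmul B (mmul C D).
Proof.
do 2!apply: functional_extensionality => ?; rewrite /mmul.
under rsum_ext => k do rewrite Rmult_comm -rsumZ.
rewrite rsum_swap; apply: rsum_ext => l; rewrite -rsumZ; apply: rsum_ext => k /=; ring.
Qed.

Lemma mvmul_mmul a b c (B : mat a b) (C : mat b c) (v : vec c) :
  mvmul (mmul B C) v = mvmul B (mvmul C v).
Proof.
apply: functional_extensionality => ?; rewrite /mvmul /mmul.
under rsum_ext => k do rewrite Rmult_comm -rsumZ.
rewrite rsum_swap; apply: rsum_ext => l; rewrite -rsumZ; apply: rsum_ext => k /=; ring.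
Qed.

Lemma trmat_mmul a b c (B : mat a b) (C : mat b c) :
  trmat (mmul B C) = mmul (trmat C) (trmat B).
Proof.
do 2!apply: functional_extensionality => ?.
by rewrite /trmat /mmul; apply: rsum_ext => k; ring.
Qed.

Lemma mmul1l a b (B : mat a b) : mmul (idmat a) B = B.
Proof. by do 2!apply: functional_extensionality => ?; rewrite /mmul rsum_delta. Qed.

Lemma mmul1r a b (B : mat a b) : mmul B (idmat b) = B.
Proof.
apply: functional_extensionality => i; apply: functional_extensionality => j.
rewrite /mmul /idmat -[RHS](rsum_delta j).
by apply: rsum_ext => k; rewrite eq_sym Rmult_comm.
Qed.

Lemma mvmul1 a (v : vec a) : mvmul (idmat a) v = v.
Proof. by apply: functional_extensionality => ?; rewrite /mvmul rsum_delta. Qed.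

Lemma dotC n (x y : vec n) : dot x y = dot y x.
Proof. by apply: rsum_ext => i; ring. Qed.

Lemma dot_mvmul a b (B : mat a b) (x : vec a) (y : vec b) :
  dot x (mvmul B y) = dot (mvmul (trmat B) x) y.
Proof.
rewrite /dot /mvmul /trmat.
under rsum_ext => i do rewrite -rsumZ.
rewrite rsum_swap; apply: rsum_ext => k; rewrite Rmult_comm -rsumZ.
by apply: rsum_ext => i /=; ring.
Qed.

Lemma weight_mvmulK n (W : mat n n) (v : vec n) : weight W -> mvmul W (mvmul W v) = v.
Proof. by move=> [_ WW]; rewrite -mvmul_mmul WW mvmul1. Qed.

Section EuclideanGeometry.
Variable n : nat.
Implicit Types x y z a b v : vec n.

Definition nsq v := dot v v.
Definition dist2 z x := nsq (fun i => z i - x i).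

Lemma coord_sqr_le_nsq v i : v i * v i <= nsq v.
Proof. by apply: (@rsum_ge_term _ (fun k => v k * v k)) => k; nra. Qed.

Lemma nsq_ge0 v : 0 <= nsq v.
Proof. by apply: rsum_ge0 => i; nra. Qed.

Lemma dotNl x y : dot (fun i => - x i) y = - dot x y.
Proof.
rewrite /dot (@rsum_ext _ _ (fun i => -1 * (x i * y i))) ?rsumZ => [|i]; ring.
Qed.

Lemma nsq_eq0 v : nsq v = 0 -> forall i, v i = 0.
Proof. by move=> v0 i; have := coord_sqr_le_nsq v i; rewrite v0; nra. Qed.

Lemma nsq_add_scaled a b t :
  nsq (fun i => a i + t * b i) = nsq a + 2 * t * dot a b + t * t * nsq b.
Proof.
rewrite /nsq /dot -!rsumZ -!rsumD; apply: rsum_ext => i /=; ring.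
Qed.

Lemma parallelogram z x y :
  nsq (fun i => x i - y i)
  = 2 * dist2 z x + 2 * dist2 z y - 4 * dist2 z (fun i => / 2 * (x i + y i)).
Proof.
have -> : forall u v w : R, u + v - w = u + v + (-1) * w by move=> *; ring.
rewrite /dist2 /nsq /dot -!rsumZ -!rsumD.
by apply: rsum_ext => i /=; field.
Qed.

(* Choosing t = s / (q + s + 1) makes t * nsq b < dot a b, which the
   expansion of nsq (a - t b) turns into a strict decrease. *)
Lemma dot_le0_of_min a b :
  (forall t, 0 < t < 1 -> nsq a <= nsq (fun i => a i + - t * b i)) -> dot a b <= 0.
Proof.
move=> a_min; apply: Rnot_lt_le => ab_gt0.
set s := dot a b in ab_gt0; set q := nsq b.
have q_ge0 : 0 <= q := nsq_ge0 b.
set t := s / (q + s + 1).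
have t_gt0 : 0 < t by apply: Rdiv_lt_0_compat; lra.
have tq_lt : t * q < s.
  rewrite /t; apply: (Rmult_lt_reg_r (q + s + 1)); first lra.
  by field_simplify; nra.
have t_lt1 : t < 1.
  by rewrite /t; apply: (Rmult_lt_reg_r (q + s + 1)); [lra | field_simplify; lra].
have := a_min t (conj t_gt0 t_lt1); rewrite nsq_add_scaled -/s -/q.
nra.
Qed.

End EuclideanGeometry.

Lemma Rabs_lt_of_sqr_lt x e : 0 < e -> x * x < e * e -> Rabs x < e.
Proof. by move=> e_gt0 sqr_lt; rewrite /Rabs; case: Rcase_abs => _; nra. Qed.

Lemma Cauchy_crit_of_sqr_bound (v r : nat -> R) :
  Un_cv r 0 -> (forall i j, (v i - v j) * (v i - v j) <= 2 * r i + 2 * r j) ->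
  Cauchy_crit v.
Proof.
move=> r_cv0 v_bound eps eps_gt0.
have [N r_small] := r_cv0 (eps * eps / 4) ltac:(nra).
exists N => i j Ni Nj; apply: Rabs_lt_of_sqr_lt => //.
have := r_small i Ni; have := r_small j Nj; have := v_bound i j.
rewrite /R_dist !Rminus_0_r => v_le /Rabs_def2 [ri_lt _] /Rabs_def2 [rj_lt _].
lra.
Qed.

Lemma cv_dist2 n (u : nat -> vec n) (p z : vec n) :
  (forall i, Un_cv (fun j => u j i) (p i)) ->
  Un_cv (fun j => dist2 z (u j)) (dist2 z p).
Proof.
move=> u_cv; rewrite /dist2 /nsq /dot.
apply: cv_rsum => i.
by apply: CV_mult; apply: CV_minus => //; apply: cv_const.
Qed.

Lemma dist2xx n (z : vec n) : dist2 z z = 0.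
Proof. by rewrite /dist2 /nsq /dot /rsum big1 // => i _; ring. Qed.

Lemma closed_lim n (K : vset n) (u : nat -> vec n) (p : vec n) :
  is_closed K -> (forall j, K (u j)) -> (forall i, Un_cv (fun j => u j i) (p i)) -> K p.
Proof.
move=> K_closed Ku u_cv; apply: K_closed => eps eps_gt0.
have dist_cv := cv_dist2 p u_cv.
have [N dist_small] := dist_cv (eps * eps) ltac:(nra).
exists (u N); split=> // i.
apply: Rabs_lt_of_sqr_lt => //.
have := dist_small N (le_n N); have := coord_sqr_le_nsq (fun i => p i - u N i) i.
rewrite /R_dist dist2xx Rminus_0_r /dist2 /= => coord_le /Rabs_def2 [dist_lt _].
lra.
Qed.

Lemma infimum_approx (T : Type) (S : T -> Prop) (f : T -> R) :
  (exists x, S x) -> (forall x, S x -> 0 <= f x) ->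
  exists d, (forall x, S x -> d <= f x) /\
            forall eps, 0 < eps -> exists x, S x /\ f x < d + eps.
Proof.
move=> [x0 Sx0] f_ge0.
set E := fun r => exists x, S x /\ r = - f x.
have E_bound : bound E by exists 0 => _ [x [Sx ->]]; have := f_ge0 x Sx; lra.
have E_nonempty : exists r, E r by exists (- f x0), x0.
have [l [l_ub l_least]] := completeness E E_bound E_nonempty.
exists (- l); split.
  move=> x Sx; suff : - f x <= l by lra.
  by apply: l_ub; exists x.
move=> eps eps_gt0; apply: NNPP => no_x.
suff : l <= l - eps by lra.
apply: l_least => _ [x [Sx ->]].
have : ~ f x < - l + eps by move=> fx_lt; apply: no_x; exists x.
lra.
Qed.

Section NearestPoint.
Variables (n : nat) (K : vset n) (z : vec n).
Hypotheses (K_nonempty : exists k, K k) (K_closed : is_closed K)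
  (K_midpoint : forall x y, K x -> K y -> K (fun i => / 2 * (x i + y i))).

Lemma nearest_point : exists2 p, K p & forall k, K k -> dist2 z p <= dist2 z k.
Proof.
have [d [d_lb d_approx]] :=
  infimum_approx (f := dist2 z) K_nonempty (fun k _ => nsq_ge0 (fun i => z i - k i)).
have [ks ks_min] : exists ks : nat -> vec n, forall j, K (ks j) /\ dist2 z (ks j) < d + RinvN j.
  apply: (choice (fun j k => K k /\ dist2 z k < d + RinvN j)) => j.
  by apply: d_approx; apply: cond_pos.
(* Minimizing sequences are Cauchy by the parallelogram law. *)
have ks_cauchy c : Cauchy_crit (fun j => ks j c).
  apply: (Cauchy_crit_of_sqr_bound (r := fun j => RinvN j)) => [|i j]; first exact: RinvN_cv.
  have [Ki di] := ks_min i; have [Kj dj] := ks_min j.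
  have := d_lb _ (K_midpoint Ki Kj); have := coord_sqr_le_nsq (fun c => ks i c - ks j c) c.
  by rewrite (parallelogram z); cbv beta; lra.
have [p ks_cv] : exists p : vec n, forall c, Un_cv (fun j => ks j c) (p c).
  apply: (choice (fun c l => Un_cv (fun j => ks j c) l)) => c.
  by have [l] := R_complete _ (ks_cauchy c); exists l.
exists p; first by apply: (closed_lim K_closed _ ks_cv) => j; case: (ks_min j).
move=> k Kk; apply: Rle_trans (d_lb k Kk).
rewrite -[d]Rplus_0_r; apply: (Rle_cv_lim _ (cv_dist2 z ks_cv)); last first.
  by apply: CV_plus; [apply: cv_const | apply: RinvN_cv].
by move=> j; case: (ks_min j) => _ /Rlt_le.
Qed.

End NearestPoint.

Lemma cone_midpoint n (K : vset n) :
  is_cone K -> forall x y, K x -> K y -> K (fun i => / 2 * (x i + y i)).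
Proof.
move=> [_ [K_add K_scale]] x y Kx Ky.
by apply: (K_scale _ (fun i => x i + y i)); [lra | apply: K_add].
Qed.

(* w is p - z for the point p of K nearest to z: first-order optimality along
   the rays p + t k and (1 - t) p gives <w, k> >= 0 and <w, p> <= 0. *)
Lemma cone_separation n (K : vset n) (z : vec n) :
  is_cone K -> is_closed K -> ~ K z ->
  exists w, (forall k, K k -> 0 <= dot w k) /\ dot w z < 0.
Proof.
move=> K_cone K_closed Kz; have [[k0 Kk0] [K_add K_scale]] := K_cone.
have [p Kp p_min] := nearest_point z (ex_intro _ k0 Kk0) K_closed (cone_midpoint K_cone).
set a := fun i => z i - p i.
have a_k k : K k -> dot a k <= 0.
  move=> Kk; apply: dot_le0_of_min => t [t_gt0 _].
  have := p_min _ (K_add _ _ Kp (K_scale t k (Rlt_le _ _ t_gt0) Kk)); rewrite /dist2.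
  have -> // : (fun i => z i - (p i + t * k i)) = (fun i => a i + - t * k i).
  by apply: functional_extensionality => i; rewrite /a; ring.
have a_p : dot a (fun i => - p i) <= 0.
  apply: dot_le0_of_min => t [_ t_lt1].
  have := p_min _ (K_scale (1 - t) p ltac:(lra) Kp); rewrite /dist2.
  have -> // : (fun i => z i - (1 - t) * p i) = (fun i => a i + - t * - p i).
  by apply: functional_extensionality => i; rewrite /a; ring.
have a_gt0 : 0 < nsq a.
  case: (Rle_lt_or_eq_dec _ _ (nsq_ge0 a)) => // /esym a0; case: Kz.
  suff -> : z = p by [].
  by apply: functional_extensionality => i; have := nsq_eq0 a0 i; rewrite /a; lra.
exists (fun i => - a i); split=> [k Kk|]; first by rewrite dotNl; have := a_k k Kk; lra.
have -> : dot (fun i => - a i) z = - nsq a + dot a (fun i => - p i).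
  have -> : forall u v, - u + v = -1 * u + v by move=> *; ring.
  by rewrite /nsq /dot -rsumZ -rsumD; apply: rsum_ext => i; rewrite /a; ring.
lra.
Qed.

Definition vimage p q (B : mat p q) (S : vset q) : vset p :=
  fun y => exists s, S s /\ y = mvmul B s.

Definition vrange p q (B : mat p q) : vset p := fun y => exists x, y = mvmul B x.

Lemma acute_of_sub_dual p (W : mat p p) (C D : vset p) :
  vsubset D (idual W C) -> vsubset D C -> acute W D.
Proof. by move=> D_dual D_C x y Dx Dy; apply: D_dual => //; apply: D_C. Qed.

Lemma dual_range_sub_image_of_acute p q (M : mat p p) (A : mat p q) (X : mat q p)
    (Y : mat q q) (K : vset q) :
  weight M -> mmul A (mmul X A) = A -> mmul M (trmat X) = mmul A Y ->
  is_cone K -> is_closed K -> (forall k, K k -> K (mvmul (mmul X A) k)) ->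
  acute M (vinter (idual M (vimage A K)) (vrange A)) ->
  vsubset (vinter (idual M (vimage A K)) (vrange A)) (vimage A K).
Proof.
move=> wM AXA MXt_range K_cone K_closed XAK D_acute x [x_dual [v x_def]]; subst x.
set z := mvmul X (mvmul A v).
case: (classic (K z)) => Kz.
  by exists z; split=> //; rewrite /z -!mvmul_mmul mmulA AXA.
exfalso.
have [w [w_dual w_z]] := cone_separation K_cone K_closed Kz.
set u := mvmul M (mvmul (trmat X) w).
have u_D : vinter (idual M (vimage A K)) (vrange A) u.
  split; last by exists (mvmul Y w); rewrite /u -!mvmul_mmul MXt_range.
  move=> _ [k [Kk ->]]; rewrite /iip /u dot_mvmul (proj1 wM) weight_mvmulK //.
  by rewrite dotC dot_mvmul dotC -mvmul_mmul; apply: w_dual; apply: XAK.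
have := D_acute _ _ (conj x_dual (ex_intro _ v erefl)) u_D.
rewrite /iip /u weight_mvmulK // dot_mvmul dotC -/z; lra.
Qed.

Section IndefiniteMoorePenrose.
Variables (m n : nat) (M : mat m m) (N : mat n n) (A : mat m n) (X : mat n m).
Hypotheses (wM : weight M) (wN : weight N) (MA_AN : mmul M A = mmul A N)
  (X_imp : is_imp M N A X).

Lemma imulv_idmat : imulv N (imul N A (idmat n)) = mvmul A.
Proof. by rewrite /imulv /imul mmul1r mmulA (proj2 wN) mmul1r. Qed.

Lemma iimage_idmat (K : vset n) : iimage N (imul N A (idmat n)) K = vimage A K.
Proof. by rewrite /iimage imulv_idmat. Qed.

Lemma irange_idmat : irange N (imul N A (idmat n)) = vrange A.
Proof. by rewrite /irange imulv_idmat. Qed.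

Lemma imulv_imp_proj : imulv N (imul M X A) = mvmul (mmul X A).
Proof.
by rewrite /imulv /imul !mmulA -(mmulA M A N) MA_AN mmulA (proj2 wN) mmul1r.
Qed.

Lemma imp_AXA : mmul A (mmul X A) = A.
Proof.
have [penrose1 _ _ _] := X_imp.
have MAXMA : mmul M (mmul A (mmul X (mmul M A))) = A.
  by rewrite -[RHS]penrose1 /imul -!mmulA MA_AN.
have AXMA : mmul A (mmul X (mmul M A)) = mmul M A.
  by move/(congr1 (mmul M)): MAXMA; rewrite -mmulA (proj2 wM) mmul1l.
move/(congr1 (fun B => mmul B N)): AXMA.
by rewrite MA_AN !mmulA (proj2 wN) !mmul1r.
Qed.

Lemma imp_range_MXt : mmul M (trmat X) = mmul A (mmul N (mmul X (trmat X))).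
Proof.
have [_ penrose2 penrose3 _] := X_imp; have [tM _] := wM; have [tN _] := wN.
have penrose2_tr :
    trmat X = mmul (trmat X) (mmul N (mmul (trmat A) (mmul M (trmat X)))).
  by rewrite -{1}penrose2 /imul !trmat_mmul tN tM.
have penrose3_tr :
    mmul M (mmul (trmat X) (mmul N (mmul (trmat A) M))) = mmul A (mmul N X).
  by move: penrose3; rewrite /iadj /imul !trmat_mmul tN !mmulA.
rewrite {1}penrose2_tr.
have -> : mmul M (mmul (trmat X) (mmul N (mmul (trmat A) (mmul M (trmat X)))))
    = mmul (mmul M (mmul (trmat X) (mmul N (mmul (trmat A) M)))) (trmat X).
  by rewrite !mmulA.
by rewrite penrose3_tr !mmulA.
Qed.

End IndefiniteMoorePenrose.

Theorem lemma3p10 (m n : nat) (M : mat m m) (N : mat n n) (A : mat m n)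
  (Adag : mat n m) (K : vset n) :
  weight M -> weight N ->
  mmul M A = mmul A N ->
  is_imp M N A Adag ->
  is_cone K -> is_closed K ->
  vsubset (iimage N (imul M Adag A) K) K ->
  acute M (vinter (idual M (iimage N (imul N A (idmat n)) K))
                  (irange N (imul N A (idmat n))))
  <->
  vsubset (vinter (idual M (iimage N (imul N A (idmat n)) K))
                  (irange N (imul N A (idmat n))))
          (iimage N (imul N A (idmat n)) K).
Proof.
move=> wM wN MA_AN Adag_imp K_cone K_closed Adag_A_K.
rewrite (iimage_idmat A wN) (irange_idmat A wN); split.
  apply: (dual_range_sub_image_of_acute wM (imp_AXA wM wN MA_AN Adag_imp)
           (imp_range_MXt wM wN Adag_imp)) => // k Kk.
  by apply: Adag_A_K; exists k; rewrite (imulv_imp_proj Adag wN MA_AN).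
by move=> D_sub; apply: (acute_of_sub_dual _ D_sub) => x [].
Qed.
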